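(* Let $G$ be a finite $3$-group of nilpotency class at most $3$ such that $G/Z(G)$ is powerful. Then $\exp \Omega_{1}(G)\le 3$.
   Context: A finite $3$-group $Q$ is powerful if $[Q,Q]\le Q^{3}=\langle q^3\mid q\in Q\rangle$. $\Omega_{1}(G)=\langle g\in G\mid g^{3}=1\rangle$. *)

From mathcomp Require Import all_boot all_fingroup all_solvable.
Set Implicit Arguments.
Unset Strict Implicit.
Unset Printing Implicit Defensive.
Local Open Scope group_scope.

Definition cube_subgroup (gT : finGroupType) (Q : {set gT}) : {set gT} :=
  <<[set x ^+ 3 | x in Q]>>.

Definition powerful3 (gT : finGroupType) (Q : {set gT}) : bool :=
  [~: Q, Q] \subset cube_subgroup Q.

Definition Omega1_3 (gT : finGroupType) (G : {set gT}) : {set gT} :=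
  <<[set g in G | g ^+ 3 == 1]>>.

(* Let n be odd and G of class at most 3, so that commutators of elements of
   L_2(G) with G are central.  For x with x^n = 1 and g in G, the commutator
   [x, g] lies in L_2(G), so the Hall-Petrescu identity
   (yx)^n = y^n x^n [x, y]^C(n,2) applies to x^g = x [x, g] and, n dividing
   C(n,2), yields [x, g]^n = 1; applied to g^x = g [g, x] it then yields
   (g^n)^x = g^n.  When G/Z(G) is powerful, [G, G] lies modulo Z(G) in the
   subgroup generated by cubes, hence centralises every x with x^3 = 1, and
   then (xy)^3 = x^3 y^3 [y, x]^3 = [y, x^3] = 1 for any two such elements. *)

From mathcomp Require Import all_boot all_fingroup all_solvable.
Set Implicit Arguments.
Unset Strict Implicit.
Local Open Scope group_scope.

Section OddPowers.
Variables (gT : finGroupType) (n : nat).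
Hypothesis odd_n : odd n.

Lemma expMg_Rmul_odd (x y : gT) :
  commute x [~ x, y] -> commute y [~ x, y] -> [~ x, y] ^+ n = 1 ->
  (y * x) ^+ n = y ^+ n * x ^+ n.
Proof.
move=> cxR cyR Rn1.
by rewrite expMg_Rmul // bin2odd // expgM Rn1 expg1n mulg1.
Qed.

Variable G : {group gT}.
Hypothesis class3G : 'L_4(G) = 1.

Lemma lcn3_commute u h : u \in 'L_3(G) -> h \in G -> commute u h.
Proof.
move=> L3u Gh; apply/commgP.
have : [~ u, h] \in 'L_4(G) by rewrite lcnSn mem_commg.
by rewrite class3G inE.
Qed.

Lemma lcn2_commute_commg a b :
  a \in 'L_2(G) -> b \in G -> commute a [~ a, b] /\ commute b [~ a, b].
Proof.
move=> L2a Gb; have L3ab : [~ a, b] \in 'L_3(G) by rewrite lcnSn mem_commg.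
have Ga : a \in G by rewrite (subsetP (lcn_sub 2 G)).
by split; apply: commute_sym; apply: lcn3_commute.
Qed.

Lemma expg_commg_eq1 x g :
  x \in G -> g \in G -> x ^+ n = 1 -> [~ x, g] ^+ n = 1.
Proof.
move=> Gx Gg xn1; have L2c : [~ x, g] \in 'L_2(G) by rewrite mem_commg.
have [ccR cxR] := lcn2_commute_commg L2c Gx.
have cRn1 : [~ [~ x, g], x] ^+ n = 1 by rewrite -commgX // xn1 commg1.
have := expMg_Rmul_odd ccR cxR cRn1.
by rewrite -conjg_mulR -conjXg xn1 conj1g mul1g.
Qed.

Lemma commute_expg x g : x \in G -> g \in G -> x ^+ n = 1 -> commute (g ^+ n) x.
Proof.
move=> Gx Gg xn1; have L2c : [~ g, x] \in 'L_2(G) by rewrite mem_commg.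
have cn1 : [~ g, x] ^+ n = 1.
  by rewrite -invgR expgVn (expg_commg_eq1 Gx Gg xn1) invg1.
have [ccR cgR] := lcn2_commute_commg L2c Gg.
have cRn1 : [~ [~ g, x], g] ^+ n = 1 by rewrite -commXg // cn1 comm1g.
have := expMg_Rmul_odd ccR cgR cRn1.
rewrite -conjg_mulR -conjXg cn1 mulg1 => gnx.
by apply/commgP; rewrite -conjg_fix gnx.
Qed.

End OddPowers.

Lemma der1_sub_of_powerful_quotient (gT : finGroupType) (G N H : {group gT}) :
  N <| G -> N \subset H -> {in G, forall g, g ^+ 3 \in H} ->
  powerful3 (G / N) -> [~: G, G] \subset H.
Proof.
case/andP=> _ nNG sNH cubesH powGN.
rewrite -(quotientSGK (subset_trans (der1_subG G) nNG) sNH) quotientR //.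
apply: subset_trans powGN _; rewrite gen_subG.
apply/subsetP => _ /imsetP[_ /morphimP[g Ng Gg ->] ->].
by rewrite -morphX // mem_quotient ?cubesH.
Qed.

Lemma group_set_expg_eq1 (gT : finGroupType) (G : {group gT}) n : odd n ->
  {in G, forall x, x ^+ n = 1 -> [~: G, G] \subset 'C[x]} ->
  group_set [set x in G | x ^+ n == 1].
Proof.
move=> odd_n cGx; apply/group_setP; split.
  by rewrite inE group1 expg1n eqxx.
move=> x y; rewrite !inE => /andP[Gx /eqP xn1] /andP[Gy /eqP yn1].
have cR z : z \in G -> z ^+ n = 1 -> commute z [~ y, x].
  move=> Gz zn1; apply/commute_sym/cent1P/(subsetP (cGx z Gz zn1)).
  by rewrite mem_commg.
have Rn1 : [~ y, x] ^+ n = 1 by rewrite -commgX ?xn1 ?commg1 //; apply: cR.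
have := expMg_Rmul_odd odd_n (cR y Gy yn1) (cR x Gx xn1) Rn1.
by rewrite groupM //= => ->; rewrite xn1 yn1 mulg1.
Qed.

Theorem lemma4p4 (gT : finGroupType) (G : {group gT}) :
  pgroup 3 G -> (nil_class G <= 3)%N -> powerful3 (G / 'Z(G))%g ->
  (exponent (Omega1_3 G) <= 3)%N.
Proof.
move=> pG classG powG.
have class3G : 'L_4(G) = 1 by apply/(lcn_nil_classP 3 (pgroup_nil pG)).
have derC x : x \in G -> x ^+ 3 = 1 -> [~: G, G] \subset 'C[x].
  move=> Gx x3; apply: subset_trans (subsetIr G _).
  apply: der1_sub_of_powerful_quotient (center_normal G) _ _ powG.
    apply/subsetP => z /centerP[Gz cGz]; rewrite inE Gz; apply/cent1P.
    exact: cGz.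
  move=> g Gg; rewrite in_setI groupX //.
  exact/cent1P/(commute_expg (isT : odd 3) class3G).
have omega_gS := group_set_expg_eq1 (isT : odd 3) derC.
have -> : Omega1_3 G = [set x in G | x ^+ 3 == 1].
  by rewrite /Omega1_3 -[[set x in G | _]]/(gval (Group omega_gS)) genGid.
by apply/dvdn_leq/exponentP => // x; rewrite inE => /andP[_ /eqP].
Qed.
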